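(* Let $x\in\mathcal D$ be such that $s_n(t)=\sum_{i}|x(t^n_{i+1}\wedge t)-x(t^n_i\wedge t)|^2$ converges pointwise on $[0,\infty)$ to a function $s$ satisfying $s(t)=s^c(t)+\sum_{u\le t}(\Delta x(u))^2$ with $s^c$ continuous and nondecreasing. Then $q_n(t)=\sum_{i:\,t^n_i\le t}(x(t^n_{i+1})-x(t^n_i))^2$ converges pointwise on $[0,\infty)$ to a limit $q$, $q=s$, and $q(t)=q^c(t)+\sum_{u\le t}(\Delta x(u))^2$ with $q^c$ continuous and nondecreasing.
   Context: Let $\pi=(\pi_n)_{n\ge1}$ be a sequence of partitions $\pi_n=(t^n_0,\dots,t^n_{k_n})$ with $0=t^n_0<\dots<t^n_{k_n}<\infty$, $t^n_{k_n}\uparrow\infty$, and mesh tending to $0$ on compacts; sums over $i$ run over $0\le i<k_n$. $\mathcal D$ is the space of càdlàg functions $[0,\infty)\to\mathbb R$; $\Delta x(u)=x(u)-x(u-)$. *)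

From HB Require Import structures.
From mathcomp Require Import all_boot all_order all_algebra.
From mathcomp Require Import all_classical all_reals all_analysis.
Set Implicit Arguments. Unset Strict Implicit. Unset Printing Implicit Defensive.
Import Order.TTheory GRing.Theory Num.Theory.
Import numFieldNormedType.Exports.
Local Open Scope classical_set_scope.
Local Open Scope ring_scope.

Definition partition_seq (R : realType) (k : nat -> nat) (tp : nat -> nat -> R) : Prop :=
  [/\ (forall n, tp n 0%N = 0),
      (forall n i, (i < k n)%N -> tp n i < tp n i.+1),
      (forall n, tp n (k n) <= tp n.+1 (k n.+1)),
      (fun n => tp n (k n)) @ \oo --> +oo &
      (forall T : R, 0 <= T -> forall e : R, 0 < e ->
         \forall n \near \oo, forall i, (i < k n)%N -> tp n i <= T ->
            tp n i.+1 - tp n i < e)].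

Definition cadlag (R : realType) (x : R -> R) : Prop :=
  (forall t : R, 0 <= t -> x @ t^'+ --> x t) /\
  (forall t : R, 0 < t -> cvg (x @ t^'-)).

(* Jump Delta x(u) = x(u) - x(u-), with the convention x(0-) = x(0). *)
Definition jump (R : realType) (x : R -> R) (u : R) : R :=
  if u <= 0 then 0 else x u - lim (x @ u^'-).

Definition sum_sq_jumps (R : realType) (x : R -> R) (t : R) : \bar R :=
  \esum_(u in [set u : R | 0 <= u <= t]) ((jump x u) ^+ 2)%:E.

Definition s_n (R : realType) (k : nat -> nat) (tp : nat -> nat -> R) (x : R -> R)
  (n : nat) (t : R) : R :=
  \sum_(0 <= i < k n) (x (Order.min (tp n i.+1) t) - x (Order.min (tp n i) t)) ^+ 2.

Definition q_n (R : realType) (k : nat -> nat) (tp : nat -> nat -> R) (x : R -> R)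
  (n : nat) (t : R) : R :=
  \sum_(0 <= i < k n | tp n i <= t) (x (tp n i.+1) - x (tp n i)) ^+ 2.

Definition qv_decomp (R : realType) (x : R -> R) (f : R -> R) : Prop :=
  exists fc : R -> R,
    {within `[0, +oo[, continuous fc} /\
    (forall u v : R, 0 <= u -> u <= v -> fc u <= fc v) /\
    (forall t : R, 0 <= t -> (f t)%:E = ((fc t)%:E + sum_sq_jumps x t)%E).

From HB Require Import structures.
From mathcomp Require Import all_boot all_order all_algebra.
From mathcomp Require Import all_classical all_reals all_analysis.
From mathcomp Require Import ring lra.
Import Order.TTheory GRing.Theory Num.Theory.
Import numFieldNormedType.Exports.
Local Open Scope classical_set_scope.
Local Open Scope ring_scope.

(* If t^n_i <= t < t^n_{i+1}, the sums q_n(t) and s_n(t) differ only in the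
   i-th term: (x(t^n_{i+1}) - x(t^n_i))^2 against (x(t) - x(t^n_i))^2.  Their
   difference factors as (x(t^n_{i+1}) - x(t)) (x(t^n_{i+1}) + x(t) - 2 x(t^n_i)),
   where the first factor tends to 0 by right continuity at t (the mesh goes to
   0) and the second stays bounded because x has a left limit at t.  Hence q_n(t)
   has the same limit s(t) as s_n(t), and q = s inherits the decomposition of s. *)

Lemma bracket_index (d : Order.disp_t) (T : orderType d) (f : nat -> T) t m :
  (f 0%N <= t -> t < f m -> exists i, [/\ (i < m)%N, f i <= t & t < f i.+1])%O.
Proof.
move=> f0t; elim: m => [|m IHm] tfm; first by have := le_lt_trans f0t tfm; rewrite ltxx.
have [tfm'|fmt] := ltP t (f m); last by exists m.
by have [i [im fit tfi]] := IHm tfm'; exists i; rewrite ltnS ltnW.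
Qed.

Lemma incr_prefix_mono {d : Order.disp_t} {T : porderType d} {f : nat -> T} {m : nat} :
  (forall i, (i < m)%N -> f i < f i.+1)%O ->
  {in [pred i | (i <= m)%N] &, {mono f : a b / (a <= b)%N >-> (a <= b)%O}}.
Proof.
move=> f_incr; apply: Order.NatMonotonyTheory.incn_inP => [a b _ bm c /andP[_ cb]|a _].
  by rewrite inE (leq_trans (ltnW cb)).
by rewrite inE; exact: f_incr.
Qed.

Section real_lemmas.
Context {R : realType}.

Lemma near_at_right_interval {P : R -> Prop} {t : R} : (\forall u \near t^'+, P u) ->
  exists2 d : R, 0 < d & forall u, t < u -> u < t + d -> P u.
Proof.
rewrite near_withinE => /nbhs_ballP [d d0 dP]; exists d => // u tu utd.
apply: dP => //; rewrite /ball /= ltr_distlC utd andbT.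
by rewrite (lt_le_trans _ (ltW tu)) // ltrBlDr ltrDl.
Qed.

Lemma near_at_left_interval {P : R -> Prop} {t : R} : (\forall u \near t^'-, P u) ->
  exists2 d : R, 0 < d & forall u, t - d < u -> u < t -> P u.
Proof.
rewrite near_withinE => /nbhs_ballP [d d0 dP]; exists d => // u tdu ut.
apply: dP => //; rewrite /ball /= ltr_distlC tdu /=.
by rewrite (le_lt_trans (ltW ut)) // ltrDl.
Qed.

Lemma sqrB_sqr_le (a b c : R) :
  `|(a - c) ^+ 2 - (b - c) ^+ 2| <= `|a - b| * (`|a - b| + 2 * `|b - c|).
Proof.
have -> : (a - c) ^+ 2 - (b - c) ^+ 2 = (a - b) * ((a - b) + 2 * (b - c)) by ring.
rewrite normrM ler_wpM2l // (le_trans (ler_normD _ _)) // normrM.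
by rewrite (@ger0_norm _ 2).
Qed.

Lemma left_limit_bounded {x : R -> R} {t : R} : 0 <= t -> (0 < t -> cvg (x @ t^'-)) ->
  exists K d : R, [/\ 0 <= K, 0 < d &
    forall u, 0 <= u -> t - d < u -> u <= t -> `|x t - x u| <= K].
Proof.
move=> t0 xl; have [tpos|t_le0] := ltP 0 t; last first.
  exists 0, 1; split => // u u0 _ ut.
  by rewrite (@le_anti _ _ u t) ?ut ?(le_trans t_le0) // subrr normr0.
have [L /cvgr_dist_lt/(_ _ ltr01) xL] := (cvg_ex _).1 (xl tpos).
have [d d0 dL] := near_at_left_interval xL.
exists (`|x t - L| + 1), d; split => // u _ tdu; rewrite le_eqVlt => /predU1P[->|ut].
  by rewrite subrr normr0.
rewrite -(subrKA L) (le_trans (ler_normD _ _)) // lerD2l ltW //; exact: dL.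
Qed.

End real_lemmas.

Lemma q_nBs_n {R : realType} {k : nat -> nat} {tp : nat -> nat -> R} (x : R -> R)
  {n : nat} {t : R} {i : nat} :
  (forall j, (j < k n)%N -> tp n j < tp n j.+1) ->
  (i < k n)%N -> tp n i <= t -> t < tp n i.+1 ->
  q_n k tp x n t - s_n k tp x n t =
  (x (tp n i.+1) - x (tp n i)) ^+ 2 - (x t - x (tp n i)) ^+ 2.
Proof.
move=> tp_incr ik tpit ttpi.
have tp_mono := incr_prefix_mono tp_incr.
rewrite /q_n /s_n big_mkcond /= -sumrB big_mkord (bigD1 (Ordinal ik)) //=.
rewrite tpit (min_r (ltW ttpi)) (min_l tpit) big1 ?addr0 // => j /eqP ji.
have jk := ltn_ord j.
have [j_lt_i|i_lt_j|j_eq_i] := ltngtP j i; last by case: ji; exact: val_inj.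
- have tpj1t : tp n j.+1 <= t by rewrite (le_trans _ tpit) // tp_mono ?inE ?(ltnW ik).
  have tpjt : tp n j <= t by rewrite (le_trans _ tpj1t) // ltW // tp_incr.
  by rewrite tpjt (min_l tpj1t) (min_l tpjt) subrr.
- have ttpj : t < tp n j by rewrite (lt_le_trans ttpi) // tp_mono ?inE ?(ltnW jk).
  have ttpj1 : t < tp n j.+1 by rewrite (lt_trans ttpj) // tp_incr.
  by rewrite leNgt ttpj /= (min_r (ltW ttpj1)) (min_r (ltW ttpj)) subrr expr0n subrr.
Qed.

Lemma q_nBs_n_cvg0 {R : realType} {k : nat -> nat} {tp : nat -> nat -> R} {x : R -> R}
  {t : R} :
  partition_seq k tp -> cadlag x -> 0 <= t ->
  (fun n => q_n k tp x n t - s_n k tp x n t) @ \oo --> 0.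
Proof.
move=> [tp0 tp_incr _ /cvgryPgt tp_last mesh] [xr xl] t0.
have [K [dK [K0 dK0 xK]]] := left_limit_bounded t0 (xl t).
apply/cvgrPdist_le => e e0.
have K1 : 0 < 1 + 2 * K by rewrite ltr_pwDl // mulr_ge0.
pose eta := Num.min 1 (e / (1 + 2 * K)).
have eta0 : 0 < eta by rewrite lt_min ltr01 divr_gt0.
have /cvgr_dist_lt/(_ _ eta0)/near_at_right_interval[dr dr0 xr_eta] := xr t t0.
have d0 : 0 < Num.min dK dr by rewrite lt_min dK0 dr0.
near=> n.
have [i [ik tpit ttpi]] : exists i, [/\ (i < k n)%N, tp n i <= t & t < tp n i.+1].
  by apply: bracket_index; [rewrite tp0 | near: n; exact: tp_last].
have : tp n i.+1 - tp n i < Num.min dK dr by move: i ik tpit {ttpi}; near: n; exact: mesh.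
rewrite lt_min => /andP[meshK meshr].
have tpi0 : 0 <= tp n i.
  by rewrite -(tp0 n) (incr_prefix_mono (tp_incr n)) ?inE ?(ltnW ik).
rewrite (q_nBs_n x (tp_incr n) ik tpit ttpi) sub0r normrN.
apply: le_trans (sqrB_sqr_le _ _ _) _.
have x_right : `|x (tp n i.+1) - x t| <= eta by rewrite distrC ltW // xr_eta //; lra.
have x_left : `|x t - x (tp n i)| <= K by apply: xK => //; lra.
have eta1 : eta <= 1 by rewrite ge_min lexx.
have eta_e : eta * (1 + 2 * K) <= e by rewrite -ler_pdivlMr // ge_min lexx orbT.
apply: le_trans eta_e; rewrite ler_pM ?addr_ge0 ?mulr_ge0 //.
by rewrite lerD ?(le_trans x_right) // ler_wpM2l.
Unshelve. all: end_near.
Qed.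

Theorem proposition2p4 (R : realType) (k : nat -> nat) (tp : nat -> nat -> R)
  (x : R -> R) (s : R -> R) :
  partition_seq k tp ->
  cadlag x ->
  (forall t : R, 0 <= t -> (fun n => s_n k tp x n t) @ \oo --> s t) ->
  qv_decomp x s ->
  exists q : R -> R,
    (forall t : R, 0 <= t -> (fun n => q_n k tp x n t) @ \oo --> q t) /\
    (forall t : R, 0 <= t -> q t = s t) /\
    qv_decomp x q.
Proof.
move=> tp_part x_cadlag s_n_cvg s_decomp; exists s; split; last by split.
move=> t t0; apply: cvg_sub0 (s_n_cvg t t0).
exact: q_nBs_n_cvg0 tp_part x_cadlag t0.
Qed.
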